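(* Let $n\ge1$ be an integer and $\kappa\ge0$. Suppose each arc travel time function is separable, $t_a=t_a(v_a)$, and is a polynomial of degree $n$ with nonnegative coefficients. Define $$\zeta(\kappa,n)=\begin{cases}(1+\kappa)^{n+1}&\text{if }\kappa\ge(n+1)^{1/n}-1,\\[2pt] \Big(\frac1{1+\kappa}-\frac{n}{(n+1)^{(n+1)/n}}\Big)^{-1}&\text{if }0\le\kappa\le(n+1)^{1/n}-1.\end{cases}$$ Let $\mathbf f^\kappa$ be any $\kappa$-MSatUE, $\mathbf f^0$ a PRUE flow and $\mathbf f^*$ a system optimal flow. Then $$C(\mathbf f^* )\le C(\mathbf f^\kappa)\le\zeta(\kappa,n)\,C(\mathbf f^* )\le\zeta(\kappa,n)\,C(\mathbf f^0).$$ In particular, $\mathsf{PoSat}_\kappa(G,\mathbf Q,\mathbf t)\le\zeta(\kappa,n)$.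
   Context: Let $G=(\mathcal N,\mathcal A)$ be a finite directed graph and $\mathcal W$ a finite set of OD pairs; each $w$ has demand $Q_w>0$ (vector $\mathbf Q$) and a finite set $\mathcal P_w$ of paths from its origin to its destination; $\mathcal P=\bigcup_w\mathcal P_w$; $\delta^p_a=1$ if arc $a$ lies on path $p$, else $0$. Feasible path flows $\mathbf F=\{\mathbf f\ge0:\sum_{p\in\mathcal P_w}f_p=Q_w\ \forall w\}$, with induced arc flows $v_a=\sum_p\delta^p_af_p$. Path travel time $c_p(\mathbf f)=\sum_a\delta^p_at_a(\mathbf v)$; total system travel time $C(\mathbf f)=\sum_{p\in\mathcal P}c_p(\mathbf f)f_p=\sum_a t_a(\mathbf v)v_a$. A system optimal flow $\mathbf f^*$ minimizes $C$ over $\mathbf F$. A flow $\mathbf f$ is a perfectly rational user equilibrium (PRUE) if $f_p>0\implies c_p(\mathbf f)=\min_{p'\in\mathcal P_w}c_{p'}(\mathbf f)$ for all $w$, $p\in\mathcal P_w$; it is a $\kappa$-MSatUE if $f_p>0\implies c_p(\mathbf f)\le(1+\kappa)\min_{p'\in\mathcal P_w}c_{p'}(\mathbf f)$. The price of satisficing is $\mathsf{PoSat}_\kappa(G,\mathbf Q,\mathbf t)=\max_{\mathbf f^\kappa}C(\mathbf f^\kappa)/C(\mathbf f^0)$, the maximum over all $\kappa$-MSatUE flows $\mathbf f^\kappa$, with $\mathbf f^0$ a PRUE flow. *)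

From HB Require Import structures.
From mathcomp Require Import all_boot all_order all_algebra.
From mathcomp Require Import all_classical all_reals all_analysis.
Set Implicit Arguments. Unset Strict Implicit. Unset Printing Implicit Defensive.
Import Order.TTheory GRing.Theory Num.Theory.
Local Open Scope ring_scope.

Fixpoint walkb (N A : eqType) (tl hd : A -> N) (o d : N) (s : seq A) : bool :=
  if s is a :: s' then (tl a == o) && walkb tl hd (hd a) d s' else o == d.

Definition is_path (N A : eqType) (tl hd : A -> N) (o d : N) (s : seq A) : bool :=
  walkb tl hd o d s && uniq (o :: map hd s).

(* delta^p_a = 1 if arc a lies on path p (pa p = arcs of p), else 0 *)
Definition delta (A P : finType) (pa : P -> seq A) (p : P) (a : A) : nat :=
  (a \in pa p).

Definition arc_flow (R : realType) (A P : finType) (pa : P -> seq A)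
  (f : P -> R) (a : A) : R :=
  \sum_(p : P) (delta pa p a)%:R * f p.

Definition path_cost (R : realType) (A P : finType) (t : A -> {poly R})
  (pa : P -> seq A) (f : P -> R) (p : P) : R :=
  \sum_(a : A) (delta pa p a)%:R * (t a).[arc_flow pa f a].

Definition total_cost (R : realType) (A P : finType) (t : A -> {poly R})
  (pa : P -> seq A) (f : P -> R) : R :=
  \sum_(p : P) path_cost t pa f p * f p.

(* f in F: nonnegative and meets every OD demand; od p = the OD pair of path p *)
Definition feasible (R : realType) (W P : finType) (od : P -> W) (Q : W -> R)
  (f : P -> R) : Prop :=
  (forall p, 0 <= f p) /\ (forall w, \sum_(p : P | od p == w) f p = Q w).

Definition MSatUE (R : realType) (A W P : finType) (od : P -> W)
  (t : A -> {poly R}) (pa : P -> seq A) (kappa : R) (f : P -> R) : Prop :=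
  forall p, 0 < f p -> forall p', od p' = od p ->
    path_cost t pa f p <= (1 + kappa) * path_cost t pa f p'.

(* PRUE: f_p > 0 -> c_p = min_{p' in P_w} c_p' (p itself is in P_w) *)
Definition PRUE (R : realType) (A W P : finType) (od : P -> W)
  (t : A -> {poly R}) (pa : P -> seq A) (f : P -> R) : Prop :=
  forall p, 0 < f p -> forall p', od p' = od p ->
    path_cost t pa f p <= path_cost t pa f p'.

Definition system_optimal (R : realType) (A W P : finType) (od : P -> W)
  (Q : W -> R) (t : A -> {poly R}) (pa : P -> seq A) (f : P -> R) : Prop :=
  feasible od Q f /\
  (forall g, feasible od Q g -> total_cost t pa f <= total_cost t pa g).

Definition zeta (R : realType) (kappa : R) (n : nat) : R :=
  if (n.+1%:R `^ (n%:R)^-1 - 1 <= kappa)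
  then (1 + kappa) ^+ n.+1
  else ((1 + kappa)^-1 - n%:R / (n.+1%:R `^ (n.+1%:R / n%:R)))^-1.

(* Averaging the satisficing condition over the paths of each OD pair gives
   C(fk) <= (1+kappa) sum_p c_p(fk) fs_p.  Polynomial costs of degree n with
   nonnegative coefficients are smooth: whenever s^n >= n+1, weighted AM-GM
   gives (n+1) s t(x) y <= n t(x) x + s^(n+1) t(y) y on each arc, hence
   (n+1) s sum_p c_p(fk) fs_p <= n C(fk) + s^(n+1) C(fs).  Taking s = 1+kappa
   when 1+kappa >= (n+1)^(1/n), and s = (n+1)^(1/n) otherwise (where
   s^(n+1) = (n+1) s), yields the two branches of zeta.  The outer
   inequalities are the optimality of fs. *)

From HB Require Import structures.
From mathcomp Require Import all_boot all_order all_algebra.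
From mathcomp Require Import all_classical all_reals all_analysis.
From mathcomp Require Import ring lra.
Set Implicit Arguments. Unset Strict Implicit. Unset Printing Implicit Defensive.
Import Order.TTheory GRing.Theory Num.Theory.
Local Open Scope ring_scope.

Section Smoothness.
Variable R : realFieldType.

Lemma weighted_AGM (m : nat) (a b : R) : 0 <= a -> 0 <= b ->
  m.+1%:R * a * b ^+ m <= a ^+ m.+1 + m%:R * b ^+ m.+1.
Proof.
move=> a0 b0; elim: m => [|m IH]; first by rewrite expr0 expr1 mulr1 mul1r mul0r addr0.
have sq0 : 0 <= m.+1%:R * b ^+ m * (a - b) ^+ 2.
  by rewrite mulr_ge0 ?sqr_ge0 // mulr_ge0 ?ler0n ?exprn_ge0.
(* Multiply the induction hypothesis by a; the gap is (m+1) b^m (a - b)^2. *)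
have aIH := ler_wpM2l a0 IH.
rewrite expr2 !exprS -(addn1 m.+1) -(addn1 m) !natrD in aIH sq0 *.
lra.
Qed.

Lemma monomial_smooth (n k : nat) (c x y : R) : (k <= n)%N ->
  0 <= c -> n.+1%:R <= c ^+ n -> 0 <= x -> 0 <= y ->
  n.+1%:R * c * (x ^+ k * y) <= n%:R * x ^+ k.+1 + c ^+ n.+1 * y ^+ k.+1.
Proof.
move=> kn c0 cn x0 y0.
have [xy|yx] := leP x y.
  have cS : n.+1%:R * c <= c ^+ n.+1 by rewrite exprSr ler_wpM2r.
  have xyk : x ^+ k * y <= y ^+ k.+1.
    by rewrite exprSr ler_wpM2r // lerXn2r ?nnegrE.
  apply: le_trans (ler_pM _ _ cS xyk) _.
  - by rewrite mulr_ge0 ?ler0n.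
  - by rewrite mulr_ge0 ?exprn_ge0.
  - by rewrite lerDr mulr_ge0 ?ler0n ?exprn_ge0.
(* For y < x, multiply through by x^(n-k) and apply AM-GM to c y and x. *)
have xnk0 : 0 < x ^+ (n - k) by rewrite exprn_gt0 // (le_lt_trans y0).
rewrite -(ler_pM2l xnk0).
have AGM := weighted_AGM n (mulr_ge0 c0 y0) x0.
have yx_nk : y ^+ (n - k) * (c ^+ n.+1 * y ^+ k.+1) <=
             x ^+ (n - k) * (c ^+ n.+1 * y ^+ k.+1).
  by rewrite ler_wpM2r ?mulr_ge0 ?exprn_ge0 // lerXn2r ?nnegrE // ltW.
have ex m : x ^+ (n - k + m) = x ^+ (n - k) * x ^+ m by rewrite exprD.
have ey : (c * y) ^+ n.+1 = c ^+ n.+1 * (y ^+ (n - k) * y ^+ k.+1).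
  by rewrite exprMn -exprD addnS subnK.
rewrite ey -[in x ^+ n](subnK kn) -[in x ^+ n.+1](subnK kn) -addnS !ex in AGM.
lra.
Qed.

Lemma poly_smooth (n : nat) (T : {poly R}) (c x y : R) :
  (size T <= n.+1)%N -> (forall i, 0 <= T`_i) ->
  0 <= c -> n.+1%:R <= c ^+ n -> 0 <= x -> 0 <= y ->
  n.+1%:R * c * (T.[x] * y) <= n%:R * (T.[x] * x) + c ^+ n.+1 * (T.[y] * y).
Proof.
move=> sT T0 c0 cn x0 y0.
rewrite !(horner_coef_wide _ sT) !mulr_suml !mulr_sumr -big_split /=.
apply: ler_sum => i _.
have := ler_wpM2l (T0 i) (monomial_smooth (leq_ord i) c0 cn x0 y0).
rewrite !exprSr; lra.
Qed.

End Smoothness.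

Lemma sum_le_of_satisficing (R : realFieldType) (I : finType) (S : pred I)
  (c u v : I -> R) (lam : R) :
  (forall i, 0 <= u i) -> (forall i, 0 <= v i) ->
  0 < \sum_(i | S i) u i -> \sum_(i | S i) u i = \sum_(i | S i) v i ->
  (forall i j, S i -> S j -> 0 < u i -> c i <= lam * c j) ->
  \sum_(i | S i) c i * u i <= lam * \sum_(i | S i) c i * v i.
Proof.
(* Multiplying by the common total turns both sides into double sums that
   compare termwise. *)
move=> u0 v0 q0 uv sat; rewrite -(ler_pM2r q0) {1}uv.
rewrite big_distrlr -mulrA [X in _ * X]mulrC big_distrlr mulr_sumr.
apply: ler_sum => i Si; rewrite mulr_sumr; apply: ler_sum => j Sj /=.
have := u0 i; rewrite le0r => /orP[/eqP ->|ui0]; first by rewrite !(mulr0, mul0r).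
have := ler_wpM2r (mulr_ge0 (u0 i) (v0 j)) (sat i j Si Sj ui0); lra.
Qed.

Section Network.
Variables (R : realType) (A W P : finType).
Variables (od : P -> W) (Q : W -> R) (t : A -> {poly R}) (pa : P -> seq A).

Definition cross_cost (g h : P -> R) : R := \sum_p path_cost t pa g p * h p.

Lemma cross_costE (g h : P -> R) :
  cross_cost g h = \sum_a (t a).[arc_flow pa g a] * arc_flow pa h a.
Proof.
rewrite /cross_cost /path_cost; under eq_bigr do rewrite big_distrl.
rewrite exchange_big; apply: eq_bigr => a _ /=.
rewrite /arc_flow mulr_sumr; apply: eq_bigr => p _ /=; ring.
Qed.

Lemma arc_flow_ge0 (f : P -> R) a : (forall p, 0 <= f p) -> 0 <= arc_flow pa f a.
Proof. by move=> f0; apply: sumr_ge0 => p _; rewrite mulr_ge0 ?ler0n. Qed.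

Lemma cross_cost_smooth (n : nat) (c : R) (g h : P -> R) :
  (forall a, size (t a) <= n.+1)%N -> (forall a i, 0 <= (t a)`_i) ->
  (forall p, 0 <= g p) -> (forall p, 0 <= h p) ->
  0 <= c -> n.+1%:R <= c ^+ n ->
  n.+1%:R * c * cross_cost g h <=
  n%:R * total_cost t pa g + c ^+ n.+1 * total_cost t pa h.
Proof.
move=> t_size t_coef g0 h0 c0 cn.
rewrite [total_cost _ _ g]cross_costE [total_cost _ _ h]cross_costE cross_costE.
rewrite !mulr_sumr -big_split /=; apply: ler_sum => a _.
by apply: poly_smooth; rewrite ?arc_flow_ge0.
Qed.

Lemma MSatUE_total_cost_le (kappa : R) (fk fs : P -> R) :
  (forall w, 0 < Q w) -> feasible od Q fk -> feasible od Q fs ->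
  MSatUE od t pa kappa fk ->
  total_cost t pa fk <= (1 + kappa) * cross_cost fk fs.
Proof.
move=> Q0 [fk0 fkQ] [fs0 fsQ] sat.
rewrite /total_cost /cross_cost (partition_big od xpredT) //=.
rewrite [X in _ * X](partition_big od xpredT) //= mulr_sumr.
apply: ler_sum => w _; apply: sum_le_of_satisficing; rewrite ?fkQ ?fsQ //.
by move=> p p' /eqP odp /eqP odp' fkp; apply: sat; rewrite // odp odp'.
Qed.

End Network.

Section Zeta.
Variables (R : realType) (n : nat).
Hypothesis n_gt0 : (0 < n)%N.
Let r : R := n.+1%:R `^ n%:R^-1.

Lemma succn_root_gt0 : 0 < r.
Proof. by rewrite powR_gt0 // ltr0n. Qed.

Lemma succn_root_expn : r ^+ n = n.+1%:R.
Proof.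
rewrite -powR_mulrn ?powR_ge0 // -powRrM mulVf ?powRr1 ?ler0n //.
by rewrite pnatr_eq0 -lt0n.
Qed.

Lemma powR_succ_div : n.+1%:R `^ (n.+1%:R / n%:R) = n.+1%:R * r.
Proof.
have n0 : n%:R != 0 :> R by rewrite pnatr_eq0 -lt0n.
have -> : n.+1%:R / n%:R = 1 + n%:R^-1 :> R by rewrite -natr1 mulrDl divff ?mul1r.
rewrite powRD ?powRr1 ?ler0n //.
by rewrite pnatr_eq0 implybT.
Qed.

Lemma zeta_denominator_gt0 (c : R) : 0 < c -> c < r ->
  0 < c^-1 - n%:R / (n.+1%:R * r).
Proof.
move=> c0 cr; rewrite subr_gt0; apply: lt_trans (_ : r^-1 < _); last first.
  by rewrite ltf_pV2 ?posrE ?succn_root_gt0.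
rewrite ltr_pdivrMr ?mulr_gt0 ?ltr0Sn ?succn_root_gt0 //.
by rewrite mulrCA mulVf ?mulr1 ?ltr_nat ?lt0r_neq0 ?succn_root_gt0.
Qed.

Lemma zeta_gt0 (kappa : R) : 0 <= kappa -> 0 < zeta kappa n.
Proof.
move=> k0; rewrite /zeta -/r powR_succ_div; case: ifP => [_|/negbT].
  by rewrite exprn_gt0 // ltr_pwDl.
by rewrite -ltNge ltrBrDl => cr; rewrite invr_gt0 zeta_denominator_gt0 ?ltr_pwDl.
Qed.

Lemma le_zeta_mul (kappa Ck X Cs : R) : 0 <= kappa -> Ck <= (1 + kappa) * X ->
  (forall s, 0 <= s -> n.+1%:R <= s ^+ n ->
     n.+1%:R * s * X <= n%:R * Ck + s ^+ n.+1 * Cs) ->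
  Ck <= zeta kappa n * Cs.
Proof.
move=> k0 CkX smooth; set c := 1 + kappa in CkX *.
have c0 : 0 < c by rewrite ltr_pwDl.
rewrite /zeta -/r powR_succ_div -/c; case: ifP => [|/negbT].
  rewrite lerBlDl -/c => rc.
  have cn : n.+1%:R <= c ^+ n.
    by rewrite -succn_root_expn; apply: lerXn2r; rewrite // nnegrE ltW // succn_root_gt0.
  have := smooth c (ltW c0) cn.
  have := ler_wpM2l (ler0n R n.+1) CkX.
  rewrite -natr1; lra.
rewrite -ltNge ltrBrDl -/c => cr.
set beta := n%:R / (n.+1%:R * r).
have m0 : 0 < n.+1%:R * r by rewrite mulr_gt0 ?ltr0Sn ?succn_root_gt0.
have CkX' : c^-1 * Ck <= X by rewrite ler_pdivrMl.
have XCs : X <= beta * Ck + Cs.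
  rewrite -(ler_pM2l m0); apply: le_trans (smooth r (ltW succn_root_gt0) _) _.
    by rewrite succn_root_expn.
  rewrite exprSr succn_root_expn /beta mulrDr mulrA mulrCA mulfV ?lt0r_neq0 //.
  by rewrite mulr1 [n.+1%:R * r]mulrC.
rewrite -(ler_pM2l (zeta_denominator_gt0 c0 cr)) -/beta mulrA mulfV.
  by rewrite mul1r; lra.
by rewrite lt0r_neq0 ?zeta_denominator_gt0.
Qed.

End Zeta.

Theorem lemma5 (R : realType)
  (Nd A W P : finType) (tl hd : A -> Nd)          (* graph: nodes, arcs *)
  (orig dest : W -> Nd) (Q : W -> R)              (* OD pairs, demands *)
  (od : P -> W) (pa : P -> seq A)                 (* paths and their OD pair *)
  (hQ : forall w, 0 < Q w)
  (hpath : forall p, is_path tl hd (orig (od p)) (dest (od p)) (pa p))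
  (hdistinct : injective (fun p => (od p, pa p)))
  (n : nat) (hn : (1 <= n)%N) (kappa : R) (hkappa : 0 <= kappa)
  (t : A -> {poly R})
  (ht : forall a, (size (t a) <= n.+1)%N /\ (forall i, 0 <= (t a)`_i))
  (fk f0 fs : P -> R)
  (hfk : feasible od Q fk /\ MSatUE od t pa kappa fk)
  (hf0 : feasible od Q f0 /\ PRUE od t pa f0)
  (hfs : system_optimal od Q t pa fs) :
  total_cost t pa fs <= total_cost t pa fk /\
  total_cost t pa fk <= zeta kappa n * total_cost t pa fs /\
  zeta kappa n * total_cost t pa fs <= zeta kappa n * total_cost t pa f0.
Proof.
have [fkF fkSat] := hfk; have [f0F _] := hf0; have [fsF fs_opt] := hfs.
have t_size a : (size (t a) <= n.+1)%N by case: (ht a).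
have t_coef a i : 0 <= (t a)`_i by case: (ht a).
split; first exact: fs_opt.
split; last by apply: ler_wpM2l; [exact: ltW (zeta_gt0 hn hkappa) | exact: fs_opt].
apply: (le_zeta_mul hn hkappa (MSatUE_total_cost_le hQ fkF fsF fkSat)) => s s0 sn.
by apply: cross_cost_smooth => //; [case: fkF | case: fsF].
Qed.
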